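(* Let $\varepsilon_1,\dots,\varepsilon_n\in\mathbb T=\partial\mathbb D$ be pairwise distinct. Then for any $\lambda_1,\dots,\lambda_n\in\mathbb D$ there exist $\beta\in\mathbb D$ and a Blaschke product $\mathcal B$ of order at most $n$ such that $\mathcal B(0)=0$ and $\mathcal B(\varepsilon_j\beta)=\lambda_j$ for $j=1,\dots,n$.
   Context: $\mathbb D$ is the open unit disc in $\mathbb C$ and $\mathbb T$ its boundary circle. A (finite) Blaschke product of order $k$ is a function $\zeta\mapsto e^{i\theta}\prod_{j=1}^k\frac{\zeta-a_j}{1-\bar a_j\zeta}$ with $a_j\in\mathbb D$, $\theta\in\mathbb R$. *)

From mathcomp Require Import all_boot all_order all_algebra.
From mathcomp Require Import reals.
From mathcomp Require Export complex.
Set Implicit Arguments. Unset Strict Implicit. Unset Printing Implicit Defensive.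
Import Order.TTheory GRing.Theory Num.Theory.
Local Open Scope ring_scope.

Definition blaschke (R : realType) (u : R[i]) (a : seq R[i]) (z : R[i]) : R[i] :=
  u * \prod_(x <- a) ((z - x) / (1 - x^* * z)).

Definition is_blaschke_of_order (R : realType) (B : R[i] -> R[i]) (k : nat) : Prop :=
  exists (u : R[i]) (a : seq R[i]),
    [/\ `|u| = 1, size a = k, all (fun x => `|x| < 1) a
      & forall z, B z = blaschke u a z].

From HB Require Import structures.
From mathcomp Require Import all_boot all_order all_algebra.
From mathcomp Require Import reals complex.
From mathcomp Require Import ring lra zify.
From mathcomp Require Import all_classical topology normedtype.
Import Order.TTheory GRing.Theory Num.Theory.
Import numFieldNormedType.Exports.
Set Implicit Arguments. Unset Strict Implicit.
Local Open Scope ring_scope. Local Open Scope classical_set_scope.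

(* Run the Schur algorithm on the data lam at the nodes eps_j s of the circle
   of radius s: divide out z (this is where B(0) = 0 comes from), then at each
   level compose with the disc automorphism sending the value at the current
   node to 0 and divide by the Blaschke factor vanishing at that node.  For
   s = 1 the nodes are unimodular, so are these factors, and the algorithm
   stays in the disc; it cannot do so for s <= |lam_j|.  Succeeding is an open
   condition on s, so the algorithm fails at the left end r of the interval
   (r, 1] on which it succeeds.  By continuity, at the first failing level k
   all Schur values at radius r are equal and unimodular.  That constant
   solves the level-k problem, and unwinding the k levels (each of which
   preserves the order of Blaschke products) gives B(z) = z * (a Blaschke
   product of order k), with k < n, interpolating lam_j at eps_j * r. *)

(* R[i] as a normed space over itself, to speak of limits of complex functions
   of a real parameter. *)
HB.instance Definition _ (R : realType) := PseudoPointedMetric.copy R[i] (R[i])^o.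
HB.instance Definition _ (R : realType) := NormedModule.copy R[i] (R[i])^o.

Section Mobius.
Variable R : realType.
Implicit Types a g w z : R[i].

Definition mobius a z := (z - a) / (1 - a^* * z).

Lemma mobius_defect a z :
  `|1 - a^* * z| ^+ 2 - `|z - a| ^+ 2 = (1 - `|a| ^+ 2) * (1 - `|z| ^+ 2).
Proof. by rewrite !normCK !rmorphB /= !rmorph1 rmorphM /= conjCK; ring. Qed.

Lemma ltr_norm_sq a z : (`|a| < `|z|) = (`|a| ^+ 2 < `|z| ^+ 2).
Proof. by rewrite ltr_pXn2r // nnegrE. Qed.

Lemma ler_norm_sq a z : (`|a| <= `|z|) = (`|a| ^+ 2 <= `|z| ^+ 2).
Proof. by rewrite ler_pXn2r // nnegrE. Qed.

Lemma ltr_norm1_sq a : (`|a| < 1) = (`|a| ^+ 2 < 1).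
Proof. by rewrite -{1}normr1 ltr_norm_sq normr1 expr1n. Qed.

Lemma ler_norm1_sq a : (`|a| <= 1) = (`|a| ^+ 2 <= 1).
Proof. by rewrite -{1}normr1 ler_norm_sq normr1 expr1n. Qed.

Lemma mobius_num_lt a z : `|a| < 1 -> `|z| < 1 -> `|z - a| < `|1 - a^* * z|.
Proof.
rewrite !ltr_norm1_sq ltr_norm_sq => ha hz.
by rewrite -subr_gt0 mobius_defect mulr_gt0 // subr_gt0.
Qed.

Lemma mobius_num_le a z : `|a| <= 1 -> `|z| <= 1 -> `|z - a| <= `|1 - a^* * z|.
Proof.
rewrite !ler_norm1_sq ler_norm_sq => ha hz.
by rewrite -subr_ge0 mobius_defect mulr_ge0 // subr_ge0.
Qed.

Lemma mobius_den_le a z : `|a| <= 1 -> 1 <= `|z| -> `|1 - a^* * z| <= `|z - a|.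
Proof.
rewrite ler_norm1_sq => ha; rewrite -[X in X <= _]normr1 ler_norm_sq normr1 expr1n => hz.
rewrite ler_norm_sq -subr_ge0 -opprB mobius_defect -mulrN opprB.
by rewrite mulr_ge0 // subr_ge0.
Qed.

Lemma mobius_den_circle a z : `|z| = 1 -> `|1 - a^* * z| = `|z - a|.
Proof.
move=> hz; apply/eqP; rewrite -(eqrXn2 (_ : 0 < 2)%N) ?nnegrE // -subr_eq0.
by rewrite mobius_defect hz expr1n subrr mulr0.
Qed.

Lemma mobius_den_neq0 a z : `|a| < 1 -> `|z| <= 1 -> 1 - a^* * z != 0.
Proof.
move=> ha hz; rewrite subr_eq0; apply/eqP => h1.
have : `|a^* * z| < 1 by rewrite normrM norm_conjC (le_lt_trans (ler_piMr _ hz)).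
by rewrite -h1 normr1 ltxx.
Qed.

Lemma mobius_den_neq0_ne a z : `|a| <= 1 -> `|z| <= 1 -> z != a -> 1 - a^* * z != 0.
Proof.
move=> ha hz za; rewrite -normr_gt0 (lt_le_trans _ (mobius_num_le ha hz)) //.
by rewrite normr_gt0 subr_eq0.
Qed.

Lemma mobius_neq0 a z : `|a| <= 1 -> `|z| <= 1 -> z != a -> mobius a z != 0.
Proof.
move=> ha hz za; rewrite mulf_neq0 ?invr_eq0 ?mobius_den_neq0_ne //.
by rewrite subr_eq0.
Qed.

Lemma norm_mobius_lt1 a z : `|a| < 1 -> `|z| < 1 -> `|mobius a z| < 1.
Proof.
move=> ha hz; have hd := mobius_den_neq0 ha (ltW hz).
by rewrite normf_div ltr_pdivrMr ?normr_gt0 // mul1r mobius_num_lt.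
Qed.

Lemma norm_mobius_circle a z : `|z| = 1 -> 1 - a^* * z != 0 -> `|mobius a z| = 1.
Proof.
by move=> hz hd; rewrite normf_div -mobius_den_circle // divff // normr_eq0.
Qed.

Lemma mobiusxx a : mobius a a = 0.
Proof. by rewrite /mobius subrr mul0r. Qed.

Lemma mobius_at0 a : mobius a 0 = - a.
Proof. by rewrite /mobius sub0r mulr0 subr0 divr1. Qed.

Lemma mobius0 z : mobius 0 z = z.
Proof. by rewrite /mobius conjC0 mul0r !subr0 divr1. Qed.

Lemma mobiusK g w : `|g| < 1 -> `|w| <= 1 -> mobius (- g) (mobius g w) = w.
Proof.
move=> hg hw; have hd := mobius_den_neq0 hg hw.
have hgg : 1 - g^* * g != 0 by rewrite mobius_den_neq0 ?ltW.
rewrite /mobius rmorphN /= opprK mulNr opprK.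
have -> : 1 + g^* * ((w - g) / (1 - g^* * w)) = (1 - g^* * g) / (1 - g^* * w).
  by field.
by field; rewrite hd hgg.
Qed.

End Mobius.

Section BlaschkeMobius.
Variable R : realType.
Implicit Types (u g x z : R[i]) (a s : seq R[i]).

Lemma blaschke_cons u x a z : blaschke u (x :: a) z = mobius x z * blaschke u a z.
Proof. by rewrite /blaschke big_cons mulrCA. Qed.

Definition blaschke_num u a : {poly R[i]} := u *: \prod_(x <- a) ('X - x%:P).
Definition blaschke_den a : {poly R[i]} := \prod_(x <- a) (1 - (x^*)%:P * 'X).

Lemma horner_blaschke_num u a z : (blaschke_num u a).[z] = u * \prod_(x <- a) (z - x).
Proof. by rewrite hornerZ horner_prod; under eq_bigr do rewrite hornerXsubC. Qed.

Lemma horner_blaschke_den a z : (blaschke_den a).[z] = \prod_(x <- a) (1 - x^* * z).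
Proof. by rewrite horner_prod; under eq_bigr do rewrite !hornerE. Qed.

Lemma blaschkeE u a z : blaschke u a z = (blaschke_num u a).[z] / (blaschke_den a).[z].
Proof. by rewrite horner_blaschke_num horner_blaschke_den -mulrA -prodf_div. Qed.

Lemma size_blaschke_num u a : u != 0 -> size (blaschke_num u a) = (size a).+1.
Proof. by move=> u0; rewrite size_scale // size_prod_XsubC. Qed.

Lemma coef_blaschke_num u a : (blaschke_num u a)`_(size a) = u.
Proof.
rewrite coefZ -[size a]/(size a).+1.-1 -(size_prod_XsubC a id) -lead_coefE.
by rewrite (monicP (monic_prod_XsubC _ _ _)) mulr1.
Qed.

Lemma blaschke_den_cons x a :
  blaschke_den (x :: a) = blaschke_den a - (x^*)%:P * ('X * blaschke_den a).
Proof. by rewrite /blaschke_den big_cons mulrBl mul1r mulrA. Qed.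

Lemma size_blaschke_den a : (size (blaschke_den a) <= (size a).+1)%N.
Proof.
elim: a => [|x a IH]; first by rewrite /blaschke_den big_nil size_poly1.
rewrite blaschke_den_cons (leq_trans (size_polyD _ _)) // geq_max size_polyN.
rewrite (leq_trans IH) //= mul_polyC (leq_trans (size_scale_leq _ _)) //.
have [->|Q0] := eqVneq (blaschke_den a) 0; first by rewrite mulr0 size_poly0.
by rewrite mulrC size_mulX.
Qed.

Lemma coef_blaschke_den a : (blaschke_den a)`_(size a) = \prod_(x <- a) (- x^*).
Proof.
elim: a => [|x a IH]; first by rewrite /blaschke_den !big_nil coef1.
rewrite blaschke_den_cons coefB coefCM coefXM /= IH big_cons.
by rewrite [_`_(size a).+1](leq_sizeP _ _ (size_blaschke_den a)) // sub0r mulNr.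
Qed.

Lemma blaschke_den_neq0 a z :
  all (fun x => `|x| < 1) a -> `|z| <= 1 -> (blaschke_den a).[z] != 0.
Proof.
move=> /allP ha hz; rewrite horner_blaschke_den prodf_seq_neq0.
by apply/allP => x xa; rewrite mobius_den_neq0 ?ha.
Qed.

(* Conjugating a product at 1 / conj z and clearing denominators swaps the
   numerator and denominator factors of a Blaschke product. *)
Lemma reflect_prod_num s z : z != 0 ->
  z ^+ size s * (\prod_(x <- s) ((z^*)^-1 - x))^* = \prod_(x <- s) (1 - x^* * z).
Proof.
move=> z0; rewrite -iter_mulr_1 -count_predT -big_const_seq rmorph_prod -big_split.
by apply: eq_bigr => x _; rewrite rmorphB fmorphV /= conjCK; field.
Qed.

Lemma reflect_prod_den s z : z != 0 ->
  z ^+ size s * (\prod_(x <- s) (1 - x^* * (z^*)^-1))^* = \prod_(x <- s) (z - x).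
Proof.
move=> z0; rewrite -iter_mulr_1 -count_predT -big_const_seq rmorph_prod -big_split.
by apply: eq_bigr => x _; rewrite rmorphB rmorphM fmorphV /= !conjCK rmorph1; field.
Qed.

(* Writing B = P / Q, mobius (- g) o B = (P + g Q) / (Q + g^* P). *)
Definition mobius_num u a g := blaschke_num u a + g *: blaschke_den a.

Section MobiusNum.
Variables (u g : R[i]) (a : seq R[i]).
Hypotheses (hu : `|u| = 1) (ha : all (fun x => `|x| < 1) a) (hg : `|g| < 1).

Let u_neq0 : u != 0. Proof. by rewrite -normr_eq0 hu oner_eq0. Qed.

Lemma horner_mobius_num z :
  (mobius_num u a g).[z] = (blaschke_num u a).[z] + g * (blaschke_den a).[z].
Proof. by rewrite /mobius_num hornerD [(g *: _).[z]]hornerZ. Qed.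

Lemma size_mobius_num : size (mobius_num u a g) = (size a).+1.
Proof.
have top_neq0 : (mobius_num u a g)`_(size a) != 0.
  rewrite coefD coef_blaschke_num coefZ coef_blaschke_den; apply/eqP => /eqP.
  rewrite addr_eq0 => /eqP /(congr1 Num.norm); rewrite normrN hu normrM normr_prod.
  apply/eqP; rewrite gt_eqF // (le_lt_trans _ hg) // ler_piMr //.
  rewrite big_seq prodr_ile1 // => x xa.
  by rewrite normr_ge0 normrN norm_conjC ltW //= (allP ha).
apply/anti_leq/andP; split; last first.
  by rewrite ltnNge; apply: contra top_neq0 => /leq_sizeP ->.
rewrite (leq_trans (size_polyD _ _)) // geq_max size_blaschke_num // leqnn /=.
by rewrite (leq_trans (size_scale_leq _ _)) ?size_blaschke_den.
Qed.

Lemma mobius_num_root_disc r : root (mobius_num u a g) r -> `|r| < 1.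
Proof.
apply: contraTT; rewrite -real_leNgt ?real1 ?normr_real // => hr.
rewrite /root horner_mobius_num addr_eq0.
have P0 : (blaschke_num u a).[r] != 0.
  rewrite horner_blaschke_num mulf_neq0 ?u_neq0 // prodf_seq_neq0.
  apply/allP => x xa /=; rewrite subr_eq0.
  by apply: contraTneq hr => ->; rewrite lt_geF // (allP ha).
have QP : `|(blaschke_den a).[r]| <= `|(blaschke_num u a).[r]|.
  rewrite horner_blaschke_num horner_blaschke_den normrM hu mul1r !normr_prod.
  rewrite big_seq [leRHS]big_seq ler_prod // => x xa.
  by rewrite normr_ge0 mobius_den_le // ltW // (allP ha).
have gQP : `|g * (blaschke_den a).[r]| < `|(blaschke_num u a).[r]|.
  by rewrite normrM (le_lt_trans (ler_wpM2l (normr_ge0 g) QP)) // gtr_pMl ?normr_gt0.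
by apply: contraTneq gQP => ->; rewrite normrN ltxx.
Qed.

(* Reflection in the unit circle turns P + g Q into Q + g^* P. *)
Lemma mobius_num_reflect c rs z :
  (forall y, (mobius_num u a g).[y] = c * \prod_(r <- rs) (y - r)) ->
  size rs = size a -> z != 0 ->
  (blaschke_den a).[z] + g^* * (blaschke_num u a).[z] =
    u * c^* * \prod_(r <- rs) (1 - r^* * z).
Proof.
move=> hornerN srs z0; have u_unit : u * u^* = 1 by rewrite -normCK hu expr1n.
have := congr1 (fun y => z ^+ size a * y^*) (hornerN (z^*)^-1).
rewrite /= horner_mobius_num horner_blaschke_num horner_blaschke_den.
rewrite rmorphD !rmorphM /= mulrDr !(mulrCA (z ^+ _)).
rewrite reflect_prod_num // reflect_prod_den // -srs reflect_prod_num // => E.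
rewrite horner_blaschke_den horner_blaschke_num -mulrA -E mulrDr.
by rewrite [u * (u^* * _)]mulrA u_unit mul1r mulrCA.
Qed.

End MobiusNum.

Lemma mobius_blaschke (u g : R[i]) (a : seq R[i]) :
  `|u| = 1 -> all (fun x => `|x| < 1) a -> `|g| < 1 ->
  exists (v : R[i]) (b : seq R[i]),
    [/\ `|v| = 1, size b = size a, all (fun x => `|x| < 1) b &
      forall z, z != 0 -> `|z| < 1 -> blaschke v b z = mobius (- g) (blaschke u a z)].
Proof.
move=> hu ha hg; set N := mobius_num u a g.
(* the zeros of the composite are the roots of N *)
have [rs Nrs] := closed_field_poly_normal N; set c := lead_coef N in Nrs.
have c0 : c != 0 by rewrite lead_coef_eq0 -size_poly_eq0 size_mobius_num.
have srs : size rs = size a.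
  have := size_mobius_num hu ha hg.
  by rewrite -/N Nrs size_scale // size_prod_XsubC => -[].
have hornerN z : N.[z] = c * \prod_(r <- rs) (z - r).
  by rewrite Nrs hornerZ horner_prod; under eq_bigr do rewrite hornerXsubC.
have rs_disc : all (fun x => `|x| < 1) rs.
  apply/allP => r rr; apply: (mobius_num_root_disc hu ha hg).
  rewrite /root -/N hornerN mulf_eq0 prodf_seq_eq0; apply/orP; right.
  by apply/hasP; exists r => //=; rewrite subrr.
have u0 : u != 0 by rewrite -normr_eq0 hu oner_eq0.
have uc0 : u * c^* != 0 by rewrite mulf_neq0 ?conjC_eq0.
exists (c / (u * c^*)), rs; split => //.
  by rewrite normf_div normrM norm_conjC hu mul1r divff ?normr_eq0.
move=> z z0 hz.
have Q0 := blaschke_den_neq0 ha (ltW hz).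
have D0 := blaschke_den_neq0 rs_disc (ltW hz).
rewrite horner_blaschke_den in D0.
have eN : \prod_(r <- rs) (z - r) = N.[z] / c by rewrite hornerN [c * _]mulrC mulfK.
have eD : \prod_(r <- rs) (1 - r^* * z) =
    ((blaschke_den a).[z] + g^* * (blaschke_num u a).[z]) / (u * c^*).
  by rewrite (mobius_num_reflect hu hornerN) // [_ * \prod_(r <- rs) _]mulrC mulfK.
have QP0 : (blaschke_den a).[z] + g^* * (blaschke_num u a).[z] != 0.
  by apply: contra D0; rewrite eD => /eqP ->; rewrite mul0r.
rewrite [blaschke u a z]blaschkeE /blaschke prodf_div eN eD horner_mobius_num.
rewrite /mobius opprK rmorphN /= mulNr opprK.
by field; apply/and5P; split; rewrite ?conjC_eq0.
Qed.

End BlaschkeMobius.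

Section ComplexLimits.
Variable R : realType.
Implicit Types (F G : R -> R[i]) (s : R).

Lemma norm_real_complex (x : R) : `|(x%:C)%C| = (`|x|%:C)%C :> R[i].
Proof. by rewrite normc_def /= expr0n addr0 sqrtr_sqr. Qed.

Lemma ltr0c (x : R) : (0 < (x%:C)%C :> R[i]) = (0 < x).
Proof. exact: (ltcR 0 x). Qed.

Lemma ltrc1 (x : R) : ((x%:C)%C < 1 :> R[i]) = (x < 1).
Proof. exact: (ltcR x 1). Qed.

(* The norm of R[i] is R[i]-valued; order limits are taken on its real part. *)
Lemma norm_Re_norm (z : R[i]) : `|z| = ((complex.Re `|z|)%:C)%C.
Proof. by rewrite RRe_real ?normr_real. Qed.

Section FilterLimits.
Context {T : Type} {D : set_system T} {FD : Filter D}.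

Lemma cvg_conjC (f : T -> R[i]) l : f @ D --> l -> (fun t => (f t)^*) @ D --> l^*.
Proof.
move=> fl; apply/cvgrPdist_lt => e e0; near=> t.
by rewrite -rmorphB norm_conjC; near: t; apply: cvgr_dist_lt.
Unshelve. all: by end_near.
Qed.

Lemma cvg_Re_norm (f : T -> R[i]) l :
  f @ D --> l -> (fun t => complex.Re `|f t|) @ D --> complex.Re `|l|.
Proof.
move=> fl; apply/cvgrPdist_lt => e e0; near=> t.
rewrite -raddfB -ltcR (le_lt_trans (normc_ge_Re _)) //.
rewrite (le_lt_trans (ler_dist_dist _ _)) //; near: t.
by apply: cvgr_dist_lt; [exact: fl | rewrite ltr0c].
Unshelve. all: by end_near.
Qed.

End FilterLimits.

Lemma continuous_real_complex : continuous (fun s : R => (s%:C)%C : R[i]).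
Proof.
move=> s; apply/cvgrPdist_lt => e e0.
have eE : e = ((complex.Re e)%:C)%C by rewrite RRe_real ?gtr0_real.
near=> t; rewrite -rmorphB norm_real_complex eE ltcR; near: t.
by apply: cvgr_dist_lt; [exact: cvg_id | rewrite -ltcR -eE].
Unshelve. all: by end_near.
Qed.

Lemma continuous_mobius F G s : 1 - (F s)^* * G s != 0 ->
  {for s, continuous F} -> {for s, continuous G} ->
  {for s, continuous (fun t => mobius (F t) (G t))}.
Proof.
move=> hd cF cG.
have cden : {for s, continuous (fun t => 1 - (F t)^* * G t)}.
  exact: cvgB (cvg_cst _) (cvgM (cvg_conjC cF) cG).
exact: cvgM (cvgB cG cF) (cvgV hd cden).
Qed.

Lemma norm_le_at_right F G s :
  {for s, continuous F} -> {for s, continuous G} ->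
  (\forall t \near s^'+, `|F t| <= `|G t|) -> `|F s| <= `|G s|.
Proof.
move=> cF cG FG; rewrite [`|F s|]norm_Re_norm [`|G s|]norm_Re_norm lecR.
apply: (ler_cvg_to (cvg_at_right_filter (cvg_Re_norm cF))
  (cvg_at_right_filter (cvg_Re_norm cG))).
by near do rewrite -lecR -!norm_Re_norm.
Unshelve. all: by end_near.
Qed.

Lemma norm_lt1_near F s : {for s, continuous F} -> `|F s| < 1 ->
  \forall t \near s, `|F t| < 1.
Proof.
move=> cF; rewrite norm_Re_norm ltrc1 => F1.
near=> t; rewrite norm_Re_norm ltrc1; near: t.
by apply: cvgr_lt F1; apply: cvg_Re_norm.
Unshelve. all: by end_near.
Qed.

End ComplexLimits.

Section LeftEndpoint.
Variable R : realType.

Lemma exists_left_endpoint (P : R -> Prop) (L : R) : 0 < L -> P 1 ->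
  (forall s, 0 < s -> s <= 1 -> P s -> \forall t \near s, P t) ->
  (forall s, 0 < s -> P s -> L <= s) ->
  exists r, [/\ 0 < r, r < 1, ~ P r & forall s, r < s -> s <= 1 -> P s].
Proof.
move=> L0 P1 Popen PL.
pose S := [set t | [/\ 0 < t, t <= 1 & forall s, t <= s -> s <= 1 -> P s]].
have S1 : S 1 by split=> // s s1 s1'; have -> : s = 1 by apply/le_anti/andP.
have SL t : S t -> L <= t by case=> t0 t1 Pt; apply: PL (Pt t _ _).
have Sinf : has_inf S by split; [exists 1 | exists L => t /SL].
pose r := inf S.
have r_le t : S t -> r <= t by apply: ge_inf; case: Sinf.
have Lr : L <= r by apply: lb_le_inf; [exists 1 | move=> t /SL].
have above s : r < s -> s <= 1 -> P s.
  move=> rs s1; have [|t [_ _ Pt] ts] := @inf_adherent _ S (s - r) _ Sinf.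
    by rewrite subr_gt0.
  by apply: Pt => //; rewrite -/r in ts; lra.
have below t : 0 < t -> t <= 1 -> (forall s, t <= s -> s <= 1 -> P s) -> r < t.
  move=> t0 t1 Pt; have /nbhs_ballP [d d0 Pd] := Popen t t0 t1 (Pt t (lexx t) t1).
  have m0 : 0 < Num.min d t by rewrite lt_min d0 t0.
  have [md mt] : Num.min d t <= d /\ Num.min d t <= t by rewrite !ge_min !lexx orbT.
  pose t' := t - Num.min d t / 2.
  have St' : S t'.
    split; [by rewrite /t'; lra | by rewrite /t'; lra |] => s ts s1.
    have [st|st] := leP t s; first exact: Pt.
    apply: Pd; rewrite -ball_normE /ball_ /= ger0_norm; rewrite /t' in ts; lra.
  by apply: (le_lt_trans (r_le t' St')); rewrite /t'; lra.
have r1 : r < 1 by case: S1; apply: below.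
have r0 : 0 < r := lt_le_trans L0 Lr.
exists r; split => // Pr.
suff : r < r by rewrite ltxx.
apply: below => //; first exact: ltW.
move=> s; rewrite le_eqVlt => /orP [/eqP <- //|]; exact: above.
Qed.

End LeftEndpoint.

Section Schur.
Variables (R : realType) (n : nat).
Local Notation N := n.+1.
Variables (eps lam : 'I_N -> R[i]).
Hypotheses (eps_unit : forall j, `|eps j| = 1) (eps_inj : injective eps)
  (lam_disc : forall j, `|lam j| < 1).

Definition node (s : R) j := eps j * (s%:C)%C.

(* Level k.+1 holds the values at the nodes of the Schur transform
   z |-> mobius (f z_k) (f z) / mobius z_k z of a level-k interpolant f;
   level 0 divides out the zero at the origin. *)
Fixpoint schur (s : R) (k : nat) (j : 'I_N) : R[i] :=
  if k is k'.+1 then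
    mobius (schur s k' (inord k')) (schur s k' j) / mobius (node s (inord k')) (node s j)
  else lam j / node s j.

Definition schur_ok_upto s K :=
  forall k (j : 'I_N), (k < K)%N -> (k <= j)%N -> `|schur s k j| < 1.

Definition schur_ok s := schur_ok_upto s N.

Lemma norm_node s j : 0 <= s -> `|node s j| = (s%:C)%C.
Proof. by move=> s0; rewrite normrM eps_unit mul1r norm_real_complex ger0_norm. Qed.

Lemma norm_node_lt1 s j : 0 <= s -> s < 1 -> `|node s j| < 1.
Proof. by move=> s0 s1; rewrite norm_node // ltrc1. Qed.

Lemma norm_node_le1 s j : 0 <= s -> s <= 1 -> `|node s j| <= 1.
Proof. by move=> s0 s1; rewrite norm_node // (lecR s 1). Qed.

Lemma node_neq0 s j : s != 0 -> node s j != 0.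
Proof.
move=> s0; rewrite mulf_neq0 ?fmorph_eq0 //.
by rewrite -normr_eq0 eps_unit oner_eq0.
Qed.

Lemma node_inj s : s != 0 -> injective (node s).
Proof.
by move=> s0 i j /(mulIf _) eq_ij; apply: eps_inj; apply: eq_ij; rewrite fmorph_eq0.
Qed.

Lemma inord_neq k (j : 'I_N) : (k < j)%N -> inord k != j.
Proof.
move=> kj; have kN : (k < N)%N := ltn_trans kj (ltn_ord j).
by apply: contraTneq kj => <-; rewrite inordK ?ltnn.
Qed.

Lemma den_node_neq0 s i j : 0 < s -> s <= 1 -> i != j ->
  1 - (node s i)^* * node s j != 0.
Proof.
move=> s0 s1 ij; rewrite mobius_den_neq0_ne ?norm_node_le1 ?(ltW s0) //.
by apply: contraNneq ij => /(node_inj (lt0r_neq0 s0)) ->.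
Qed.

Lemma mobius_node_neq0 s i j : 0 < s -> s <= 1 -> i != j ->
  mobius (node s i) (node s j) != 0.
Proof.
move=> s0 s1 ij; rewrite mobius_neq0 ?norm_node_le1 ?(ltW s0) //.
by apply: contraNneq ij => /(node_inj (lt0r_neq0 s0)) ->.
Qed.

Lemma continuous_node s j : {for s, continuous (node^~ j)}.
Proof. by apply: cvgM; [exact: cvg_cst | exact: continuous_real_complex]. Qed.

Lemma schur_ok1 : schur_ok 1.
Proof.
have node1 j : `|node 1 j| = 1 by rewrite norm_node.
move=> k j _; elim: k j => [|k IH] j kj.
  by rewrite /= normf_div node1 divr1.
have kN : (k < N)%N := ltn_trans kj (ltn_ord j).
have kk : (k <= @inord n k)%N by rewrite inordK.
rewrite /= normf_div [`|mobius (node _ _) _|]norm_mobius_circle //; last first.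
  by rewrite den_node_neq0 ?inord_neq.
by rewrite divr1 norm_mobius_lt1 // IH // ltnW.
Qed.

Lemma lam_lt_radius s j : 0 < s -> schur_ok s -> `|lam j| < (s%:C)%C.
Proof.
move=> s0 /(_ 0%N j isT isT) /=; rewrite normf_div norm_node ?ltW //.
by rewrite ltr_pdivrMr ?ltr0c // mul1r.
Qed.

Section Continuity.
Variable s0 : R.
Hypotheses (s0_gt0 : 0 < s0) (s0_le1 : s0 <= 1).

Lemma continuous_schur0 j : {for s0, continuous (fun s => schur s 0 j)}.
Proof.
apply: cvgM; first exact: cvg_cst.
by apply: cvgV; [rewrite node_neq0 ?lt0r_neq0 | exact: continuous_node].
Qed.

Lemma continuous_schurS k (j : 'I_N) : (k < j)%N ->
  {for s0, continuous (fun s => schur s k (inord k))} ->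
  {for s0, continuous (fun s => schur s k j)} ->
  `|schur s0 k (inord k)| < 1 -> `|schur s0 k j| <= 1 ->
  {for s0, continuous (fun s => schur s k.+1 j)}.
Proof.
move=> kj ck cj gk wj; have kn := inord_neq kj.
have cnum := continuous_mobius (mobius_den_neq0 gk wj) ck cj.
have cden : {for s0, continuous (fun s => mobius (node s (inord k)) (node s j))}.
  by apply: continuous_mobius; [exact: den_node_neq0 | exact: continuous_node..].
exact: cvgM cnum (cvgV (mobius_node_neq0 s0_gt0 s0_le1 kn) cden).
Qed.

Lemma continuous_schur K : schur_ok_upto s0 K ->
  forall k (j : 'I_N), (k <= K)%N -> (k <= j)%N ->
  {for s0, continuous (fun s => schur s k j)}.
Proof.
move=> ok; elim=> [|k IH] j kK kj; first exact: continuous_schur0.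
have kk : (k <= @inord n k)%N by rewrite inordK // (ltn_trans kj).
apply: continuous_schurS => //.
- exact: IH (ltnW kK) kk.
- exact: IH (ltnW kK) (ltnW kj).
- exact: ok kK kk.
- exact: ltW (ok _ _ kK (ltnW kj)).
Qed.

Lemma schur_ok_open : schur_ok s0 -> \forall s \near s0, schur_ok s.
Proof.
move=> ok; have near_ok (k j : 'I_N) :
    \forall s \near s0, (k <= j)%N -> `|schur s k j| < 1.
  have [kj|_] := leqP k j; last by near=> s.
  have ckj := continuous_schur ok (ltnW (ltn_ord k)) kj.
  by apply: filterS (norm_lt1_near ckj (ok _ _ (ltn_ord k) kj)).
have all_ok : \forall s \near s0, forall k j : 'I_N, (k <= j)%N -> `|schur s k j| < 1.
  exact: filter_forall _ (fun k => filter_forall _ (near_ok k)).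
by move: all_ok; apply: filterS => s oks k j kN; apply: oks (Ordinal kN) j.
Unshelve. all: by end_near.
Qed.

End Continuity.

Lemma exists_first_failure s : ~ schur_ok s ->
  exists k (j : 'I_N), [/\ (k <= j)%N, ~~ (`|schur s k j| < 1) & schur_ok_upto s k].
Proof.
move=> not_ok; pose fails m := [exists j : 'I_N, (m <= j)%N && ~~ (`|schur s m j| < 1)].
have [m fail_m] : exists m, fails m.
  apply: contrapT => nofail; apply: not_ok => m j _ mj.
  apply/negPn/negP => bad; apply: nofail; exists m.
  by apply/existsP; exists j; rewrite mj bad.
case: (ex_minnP (ex_intro fails m fail_m)) => k /existsP [j /andP [kj fail_j]] k_min.
exists k, j; split=> // i l ik il; apply/negPn/negP => bad.
have : fails i by apply/existsP; exists l; rewrite il bad.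
by move/k_min; rewrite leqNgt ik.
Qed.

Section Degeneracy.
Variables (r : R) (k : nat).
Hypotheses (r_gt0 : 0 < r) (r_lt1 : r < 1) (k_lt : (k < N)%N)
  (ok_upto : schur_ok_upto r k) (ok_right : forall s, r < s -> s <= 1 -> schur_ok s).
Local Notation kk := (inord k : 'I_N).

Let k_le_kk : (k <= kk)%N. Proof. by rewrite inordK. Qed.

Let ok_near_right : \forall s \near r^'+, [/\ 0 < s, s <= 1 & schur_ok s].
Proof.
near=> s; have rs : r < s by near: s; exact: nbhs_right_gt.
have s1 : s <= 1 by apply: ltW; near: s; exact: nbhs_right_lt.
by split; [exact: lt_trans rs | | exact: ok_right].
Unshelve. all: by end_near.
Qed.

Let continuous_schur_k (j : 'I_N) : (k <= j)%N ->
  {for r, continuous (fun s => schur s k j)}.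
Proof. by move=> kj; have := continuous_schur r_gt0 (ltW r_lt1) ok_upto (leqnn k) kj. Qed.

Lemma norm_schur_le1 (j : 'I_N) : (k <= j)%N -> `|schur r k j| <= 1.
Proof.
move=> kj; rewrite -[1]normr1.
apply: norm_le_at_right (continuous_schur_k kj) (cvg_cst _) _.
by apply: filterS ok_near_right => s [_ _ oks]; rewrite normr1 ltW // oks.
Qed.

Lemma norm_schur_diag (j : 'I_N) : (k <= j)%N -> ~~ (`|schur r k j| < 1) ->
  `|schur r k kk| = 1.
Proof.
move=> kj1 fail1; have := norm_schur_le1 k_le_kk.
rewrite le_eqVlt => /orP [/eqP // | diag_lt1].
have := norm_schur_le1 kj1; rewrite le_eqVlt (negPf fail1) orbF => /eqP w1.
have kj : (k < j)%N.
  rewrite ltn_neqAle kj1 andbT; apply: contraTneq diag_lt1 => kj.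
  by have -> : kk = j by apply: val_inj; rewrite /= inordK // kj.
have next_le1 : `|schur r k.+1 j| <= 1.
  have cnext := continuous_schurS r_gt0 (ltW r_lt1) kj (continuous_schur_k k_le_kk)
    (continuous_schur_k kj1) diag_lt1 (norm_schur_le1 kj1).
  rewrite -[1]normr1; apply: norm_le_at_right cnext (cvg_cst _) _.
  apply: filterS ok_near_right => s [_ _ oks].
  by rewrite normr1 ltW // oks // (leq_ltn_trans kj).
suff : 1 < `|schur r k.+1 j| by move/lt_le_trans/(_ next_le1); rewrite ltxx.
rewrite /= normf_div norm_mobius_circle ?mobius_den_neq0 ?norm_schur_le1 // div1r.
rewrite invf_gt1 ?normr_gt0 ?mobius_node_neq0 ?inord_neq ?ltW //.
by rewrite norm_mobius_lt1 ?norm_node_lt1 ?ltW.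
Qed.
Hypothesis diag_unit : `|schur r k kk| = 1.

Lemma schur_const (j : 'I_N) : (k <= j)%N -> schur r k j = schur r k kk.
Proof.
move=> kj; have [-> // | j_ne] := eqVneq j kk.
have kj' : (k < j)%N.
  rewrite ltn_neqAle kj andbT; apply: contra j_ne => /eqP kj_eq.
  by apply/eqP/val_inj; rewrite /= inordK // kj_eq.
have kn := inord_neq kj'.
have dist_le : `|schur r k j - schur r k kk| <=
    `|mobius (node r kk) (node r j) * (1 - (schur r k kk)^* * schur r k j)|.
  have cF : {for r, continuous (fun s => schur s k j - schur s k kk)}.
    exact: cvgB (continuous_schur_k kj) (continuous_schur_k k_le_kk).
  have cb : {for r, continuous (fun s => mobius (node s kk) (node s j))}.
    by apply: continuous_mobius;
      [exact: den_node_neq0 (ltW r_lt1) kn | exact: continuous_node..].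
  have cd : {for r, continuous (fun s => 1 - (schur s k kk)^* * schur s k j)}.
    apply: cvgB; first exact: cvg_cst.
    exact: cvgM (cvg_conjC (continuous_schur_k k_le_kk)) (continuous_schur_k kj).
  have cG : {for r, continuous (fun s =>
      mobius (node s kk) (node s j) * (1 - (schur s k kk)^* * schur s k j))}.
    exact: cvgM cb cd.
  apply: norm_le_at_right cF cG _; apply: filterS ok_near_right => s [s_gt0 s_le1 oks].
  have -> : schur s k j - schur s k kk =
      schur s k.+1 j *
      (mobius (node s kk) (node s j) * (1 - (schur s k kk)^* * schur s k j)).
    rewrite /= mulrA divfK ?mobius_node_neq0 //.
    by rewrite /mobius divfK // mobius_den_neq0 ?oks // ltW ?oks.
  by rewrite normrM ler_piMl // ltW // oks // (leq_ltn_trans kj').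
move: dist_le; set g := schur r k kk; set w := schur r k j.
set b := mobius (node r kk) (node r j) => dist_le.
have gg : g^* * g = 1 by rewrite mulrC -normCK diag_unit expr1n.
have bgw : `|b * (1 - g^* * w)| = `|b| * `|w - g|.
  rewrite -[in 1 - _]gg -mulrBr normrM [`|g^* * _|]normrM norm_conjC diag_unit.
  by rewrite mul1r distrC.
rewrite bgw in dist_le.
apply/eqP; rewrite -subr_eq0; apply: contraTT dist_le => wg.
rewrite lt_geF // gtr_pMl ?normr_gt0 //.
by rewrite norm_mobius_lt1 ?norm_node_lt1 ?ltW.
Qed.
Lemma schur_level_blaschke d : (d <= k)%N ->
  exists (u : R[i]) (a : seq R[i]),
    [/\ `|u| = 1, size a = d, all (fun x => `|x| < 1) a &
      forall j : 'I_N, (k - d <= j)%N -> blaschke u a (node r j) = schur r (k - d) j].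
Proof.
elim: d => [|d IH] dk.
  exists (schur r k kk), [::]; split=> // j; rewrite subn0 => kj.
  by rewrite /blaschke big_nil mulr1 schur_const.
have [u [a [hu sa ha hB]]] := IH (ltnW dk).
set m := (k - d.+1)%N; have mS : m.+1 = (k - d)%N by rewrite subnSK.
have mk : (m < k)%N by rewrite /m; lia.
have mm : (m <= @inord n m)%N by rewrite inordK // (ltn_trans mk).
have hg := ok_upto mk mm.
have ha' : all (fun x => `|x| < 1) (node r (inord m) :: a).
  by rewrite /= ha andbT norm_node_lt1 ?ltW.
have [v [b [hv sb hb hmob]]] := mobius_blaschke hu ha' hg.
exists v, b; split=> // [|j mj]; first by rewrite sb /= sa.
have r_ne0 := lt0r_neq0 r_gt0.
rewrite hmob ?node_neq0 ?norm_node_lt1 ?ltW // blaschke_cons.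
have [-> | jm] := eqVneq j (inord m); first by rewrite mobiusxx mul0r mobius_at0 opprK.
have mj' : (m < j)%N.
  rewrite ltn_neqAle mj andbT; apply: contra jm => /eqP mj_eq.
  by apply/eqP/val_inj; rewrite /= inordK // mj_eq.
rewrite hB -?mS // /= mulrC divfK ?mobius_node_neq0 1?eq_sym ?ltW //.
by rewrite mobiusK // ltW // ok_upto // ltnW.
Qed.

End Degeneracy.

Lemma schur_interpolation : (exists j, lam j != 0) ->
  exists (beta : R[i]) (B : R[i] -> R[i]) (k : nat),
    [/\ `|beta| < 1, (k <= N)%N, is_blaschke_of_order B k, B 0 = 0
      & forall j, B (eps j * beta) = lam j].
Proof.
case=> j0 lam0; pose L := complex.Re `|lam j0|.
have L_gt0 : 0 < L by rewrite -ltr0c -norm_Re_norm normr_gt0.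
have L_le s : 0 < s -> schur_ok s -> L <= s.
  by move=> s0 oks; rewrite -(lecR L) -norm_Re_norm ltW // lam_lt_radius.
have [r [r_gt0 r_lt1 not_ok ok_right]] :=
  exists_left_endpoint L_gt0 schur_ok1 schur_ok_open L_le.
have [k [j1 [kj1 fail1 ok_upto]]] := exists_first_failure not_ok.
have kN : (k < N)%N := leq_ltn_trans kj1 (ltn_ord j1).
have diag1 := norm_schur_diag r_gt0 r_lt1 kN ok_upto ok_right kj1 fail1.
have [u [a [hu sa ha hB]]] :=
  schur_level_blaschke r_gt0 r_lt1 kN ok_upto ok_right diag1 (leqnn k).
exists (r%:C)%C, (blaschke u (0 :: a)), k.+1; split=> //.
- by rewrite norm_real_complex ger0_norm ?ltW // ltrc1.
- by exists u, (0 :: a); rewrite /= sa normr0 ltr01 ha.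
- by rewrite blaschke_cons mobiusxx mul0r.
move=> j; rewrite blaschke_cons mobius0 -[eps j * _]/(node r j) hB subnn //=.
by rewrite mulrC divfK // node_neq0 // lt0r_neq0.
Qed.

End Schur.

Theorem lemma8 (R : realType) (n : nat) (hn : (0 < n)%N)
  (eps lam : 'I_n -> R[i])
  (heps : forall j, `|eps j| = 1) (hinj : injective eps)
  (hlam : forall j, `|lam j| < 1) :
  exists (beta : R[i]) (B : R[i] -> R[i]) (k : nat),
    [/\ `|beta| < 1, (k <= n)%N, is_blaschke_of_order B k, B 0 = 0
      & forall j, B (eps j * beta) = lam j].
Proof.
case: n hn eps lam heps hinj hlam => // n _ eps lam heps hinj hlam.
have [/forallP lam0 | ] := boolP [forall j, lam j == 0].
  exists 0, (blaschke 1 [:: 0]), 1%N; split=> //.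
  - by rewrite normr0 ltr01.
  - by exists 1, [:: 0]; rewrite normr1 /= normr0 ltr01.
  - by rewrite blaschke_cons mobiusxx mul0r.
  - by move=> j; rewrite mulr0 blaschke_cons mobiusxx mul0r (eqP (lam0 j)).
rewrite negb_forall => /existsP [j0 lam0].
exact: schur_interpolation heps hinj hlam (ex_intro _ j0 lam0).
Qed.
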